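(* Let $U\subset\mathbb{C}\setminus\{0\}$ be a connected domain and let $f_1,f_2$ be complex-differentiable and nowhere vanishing on $U$ such that $\mathcal{A}[f_1]=f_2$ and $\mathcal{A}[f_2]=f_1$ on $U$. Then $f_2-f_1$ is constant on $U$.
   Context: For a complex-differentiable, nowhere-vanishing function $f$ on a domain $U\subset\mathbb{C}\setminus\{0\}$, the dual logarithmic derivative operator is $\mathcal{A}[f](x)=\dfrac{x f'(x)}{f(x)}$ (equivalently $\mathrm{d}\ln f/\mathrm{d}\ln x$ for fixed analytic branches of the logarithms). *)

(* R[i] (mathcomp-real-closed `complex`) is a numFieldType, hence a normed
   space over itself; `derivable f z 1` over the scalar field R[i] is exactly
   complex differentiability at z, and 'D_1 f is the complex derivative. *)
From HB Require Import structures.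
From mathcomp Require Import all_boot all_order all_algebra.
From mathcomp Require Import complex.
From mathcomp Require Import all_classical all_reals all_analysis.
Set Implicit Arguments. Unset Strict Implicit. Unset Printing Implicit Defensive.
Import Order.TTheory GRing.Theory Num.Theory.
Import numFieldNormedType.Exports.
Local Open Scope ring_scope.
Local Open Scope classical_set_scope.

Definition dual_logder (R : rcfType) (f : R[i]^o -> R[i]^o) (x : R[i]^o) : R[i]^o :=
  x * 'D_1 f x / f x.

(* From z f1' = f1 f2 = z f2' and z <> 0 we get f1' = f2', so g := f2 - f1
   has zero complex derivative on U.  For fixed c, p, v the real function
   t |-> Re (c g (p + t v)) then has derivative Re (c v g'(p + t v)) = 0, so
   by the real mean value theorem g is constant on every ball contained in U.
   A locally constant function on a connected set is constant. *)

From HB Require Import structures.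
From mathcomp Require Import all_boot all_order all_algebra.
From mathcomp Require Import complex.
From mathcomp Require Import all_classical all_reals all_analysis.
Import Order.TTheory GRing.Theory Num.Theory.
Import numFieldNormedType.Exports.
Local Open Scope ring_scope.
Local Open Scope classical_set_scope.
Local Open Scope complex_scope.

Lemma connected_locally_cst (T : topologicalType) (Y : Type) (A : set T)
    (g : T -> Y) :
  connected A -> (forall x, A x -> \forall y \near x, g y = g x) ->
  forall x y, A x -> A y -> g x = g y.
Proof.
move=> cA gloc x y Ax Ay.
have : [set z | A z /\ g z = g x] = A.
  apply: cA; first by exists x.
  - exists [set z | g z = g x]°; first exact: (@open_interior T).
    apply/seteqP; split=> z /= [Az gz]; split=> //.
      by apply: filterS (gloc z Az) => w /= ->.
    exact: interior_subset gz.
  - exists (~` [set z | g z <> g x]°); first exact/open_closedC/(@open_interior T).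
    apply/seteqP; split=> z /= [Az gz]; split=> //.
      by move/interior_subset.
    by apply: contrapT => gzx; apply: gz; apply: filterS (gloc z Az) => w /= ->.
by move/seteqP => [_ /(_ y Ay) [_ ->]].
Qed.

Lemma cvg_dnbhs (T : Type) (U : topologicalType) (F : set_system T)
    {FF : Filter F} (f : T -> U) (y : U) :
  f @ F --> y -> (\forall t \near F, f t != y) -> f @ F --> y^'.
Proof. by move=> fy fNy P /fy; apply: filterS2 fNy => t ? /=; apply. Qed.

Section complex_real_lines.
Context {R : realType}.
Local Notation C := R[i]^o.

Lemma normc_real (s : R) : `|s%:C : C| = `|s|%:C.
Proof. by rewrite normc_def /= expr0n addr0 sqrtr_sqr. Qed.

Lemma Re_realM (r : R) (z : C) : complex.Re (r%:C * z) = r * complex.Re z.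
Proof. by case: z => a b; rewrite /= mul0r subr0. Qed.

Lemma cvg_real_complex {T : Type} {F : set_system T} {FF : Filter F}
    {f : T -> R} {a : R} :
  f @ F --> a -> (fun t => (f t)%:C : C) @ F --> (a%:C : C).
Proof.
move=> fa; apply/(@cvgrPdist_le _ C) => e.
rewrite ltcE /= => /andP[/eqP Ime Re_gt0].
have /cvgrPdist_le /(_ _ Re_gt0) := fa.
apply: filterS => t.
by rewrite -raddfB normc_real; case: e Ime {Re_gt0} => a' b /= ->; rewrite lecR.
Qed.

Lemma cvg_Re {T : Type} {F : set_system T} {FF : Filter F} {f : T -> C} {l : C} :
  f @ F --> l -> (fun t => complex.Re (f t)) @ F --> complex.Re l.
Proof.
move=> fl; apply/cvgrPdist_le => e e_gt0.
have /(@cvgrPdist_le _ C) /(_ e%:C) := fl; rewrite ltcR => /(_ e_gt0).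
apply: filterS => t.
by rewrite -lecR -raddfB; apply: le_trans (normc_ge_Re _).
Qed.

Lemma cvg_real_line {v : C} : v != 0 ->
  (fun h : R => h%:C * v) @ (0 : R)^' --> (0 : C)^'.
Proof.
move=> v_neq0; apply: (@cvg_dnbhs R C).
  rewrite -(mul0r v); apply: (cvgM _ (cvg_cst v)); rewrite -[0 : C]/(0%:C).
  apply: cvg_real_complex; exact: cvg_within.
near=> h; rewrite mulf_neq0 // -[0 : C]/(0%:C) (inj_eq (@complexI _)).
by near: h; exact: nbhs_dnbhs_neq.
Unshelve. all: by end_near. Qed.

Lemma is_derive_Re_line (c : C) {g : C -> C} {p v : C} {t : R} {dg : C} :
  is_derive (p + t%:C * v) 1 g dg ->
  is_derive t 1 (fun s : R => complex.Re (c * g (p + s%:C * v)))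
    (complex.Re (c * v * dg)).
Proof.
set q := p + t%:C * v => g'q.
(* For v = 0 the map h |-> h v does not send 0^' to 0^'. *)
have [v0|v_neq0] := eqVneq v 0.
  rewrite v0 mulr0 mul0r.
  under [X in is_derive _ _ X]eq_fun do rewrite mulr0 addr0.
  exact: is_derive_cst.
pose phi (s : R) := complex.Re (c * g (p + s%:C * v)).
pose quot (h : R) := h^-1 *: ((phi \o shift t) (h *: 1) - phi t).
pose Q (k : C) := k^-1 *: ((g \o shift q) (k *: 1) - g q).
have Qd : Q @ 0^' --> dg by rewrite -[dg]derive_val; exact: ex_derive.
have quotE : quot = (fun h => complex.Re (c * v * Q (h%:C * v))).
  apply/funext => h; rewrite /quot /phi /Q /=.
  have -> : p + (h%:A + t)%:C * v = (h%:C * v)%:A + q.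
    by rewrite /q /GRing.scale /= !mulr1 rmorphD mulrDl addrCA.
  rewrite /GRing.scale /= -/q -raddfB -mulrBr -Re_realM fmorphV invfM.
  by congr complex.Re; rewrite [_ / v]mulrC -!mulrA mulVKf // mulrCA.
have quot_cvg : quot @ 0^' --> complex.Re (c * v * dg).
  rewrite quotE.
  exact: cvg_comp _ _ (cvg_real_line v_neq0) (cvg_Re (cvgM (cvg_cst (c * v)) Qd)).
exact: DeriveDef (cvgP _ quot_cvg) (cvg_lim _ quot_cvg).
Qed.

Lemma ball_segment {p w r : C} {t : R} :
  ball p r w -> t \in `[0, 1]%R -> ball p r (p + t%:C * (w - p)).
Proof.
rewrite /ball /= in_itv /= => pw /andP[t_ge0 t_le1].
rewrite opprD addNKr normrN normrM normc_real (ger0_norm t_ge0) distrC.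
by apply: le_lt_trans pw; rewrite ler_piMl // lecR.
Qed.

Lemma complex_eq_Re_mul (x y : C) :
  (forall c : C, complex.Re (c * x) = complex.Re (c * y)) -> x = y.
Proof.
move=> eqRe; have := eqRe 1; rewrite !mul1r => eqRex.
have := eqRe 'i; rewrite ![('i * _)]mulrC !ReiNIm => /oppr_inj eqImxy.
by apply/eqP; rewrite eq_complex eqRex eqImxy !eqxx.
Qed.

Lemma is_derive_0_ball_cst (g : C -> C) (p r : C) :
  (forall z, ball p r z -> is_derive z 1 g 0) ->
  forall w, ball p r w -> g w = g p.
Proof.
move=> g'0 w pw; apply: complex_eq_Re_mul => c.
pose phi (s : R) := complex.Re (c * g (p + s%:C * (w - p))).
have phi'0 (s : R) : s \in `[0, 1]%R -> is_derive s 1 phi 0.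
  move=> /(ball_segment pw) /g'0 g's.
  by have := is_derive_Re_line c g's; rewrite mulr0.
have phi_cont : {within `[0, 1], continuous phi}.
  by apply: derivable_within_continuous => s /phi'0 phi's; exact: ex_derive.
have [s _] := MVT_segment ler01 (fun s s01 => phi'0 s (subset_itv_oo_cc s01))
  phi_cont.
rewrite mul0r => /eqP; rewrite subr_eq0 => /eqP.
by rewrite /phi rmorph1 rmorph0 mul1r mul0r addr0 subrKC.
Qed.

Lemma derive_eq_of_dual_logder_swap {f1 f2 : C -> C} {z : C} :
  z != 0 -> f1 z != 0 -> f2 z != 0 ->
  dual_logder f1 z = f2 z -> dual_logder f2 z = f1 z ->
  'D_1 f1 z = 'D_1 f2 z.
Proof.
rewrite /dual_logder => z_neq0 f1z_neq0 f2z_neq0.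
(* Abstracting the derivatives avoids a very slow unification in [mulfI]. *)
move: ('D_1 f1 z) ('D_1 f2 z) => f1' f2'.
move=> /(canRL (divfK f1z_neq0)) f1'E /(canRL (divfK f2z_neq0)) f2'E.
by apply: (mulfI z_neq0); rewrite f1'E f2'E mulrC.
Qed.

End complex_real_lines.

Theorem lemma4p1 (R : realType) (U : set R[i]^o) (f1 f2 : R[i]^o -> R[i]^o) :
  open U -> connected U -> U `<=` [set z | z != 0] ->
  (forall z, U z -> derivable f1 z 1) ->
  (forall z, U z -> derivable f2 z 1) ->
  (forall z, U z -> f1 z != 0) ->
  (forall z, U z -> f2 z != 0) ->
  (forall z, U z -> dual_logder f1 z = f2 z) ->
  (forall z, U z -> dual_logder f2 z = f1 z) ->
  exists c : R[i]^o, forall z, U z -> f2 z - f1 z = c.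
Proof.
move=> oU cU U_neq0 d1 d2 f1_neq0 f2_neq0 h1 h2.
pose g := f2 - f1.
have g'0 z : U z -> is_derive z 1 g 0.
  move=> Uz; rewrite -(subrr ('D_1 f2 z)) -[X in _ - X](derive_eq_of_dual_logder_swap
    (U_neq0 _ Uz) (f1_neq0 _ Uz) (f2_neq0 _ Uz) (h1 _ Uz) (h2 _ Uz)).
  exact: is_deriveB (derivableP (d2 _ Uz)) (derivableP (d1 _ Uz)).
have g_loc z : U z -> \forall w \near z, g w = g z.
  move=> Uz; have /nbhs_ballP[r r_gt0 zrU] : nbhs z U by exact: oU.
  apply/nbhs_ballP; exists r => //.
  by apply: is_derive_0_ball_cst => w /zrU; exact: g'0.
have [[z0 Uz0]|U0] := pselect (U !=set0).
  by exists (g z0) => z Uz; exact: connected_locally_cst cU g_loc z z0 Uz Uz0.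
by exists 0 => z Uz; case: U0; exists z.
Qed.
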